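(* Let $(a_i)_{i\ge0}$ be a quasi-species, let $p_n(\mathbf y)$ be its associated linear sequence of symmetric functions of binomial type, and let $p_n(x)=\Pi\,p_n(\mathbf y)\in\mathbb C[x]$. Let $\mathrm{Gen}(t)=\sum_{i\ge0}a_it^i/i!$. Then, as formal power series in $t$ with coefficients in $\mathbb C[x]$, $$\sum_{n\ge0}p_n(x)\frac{t^n}{n!}=\mathrm{Gen}(t)^x=\exp\big(x\log\mathrm{Gen}(t)\big).$$
   Context: A quasi-species is a sequence $(a_i)_{i\ge0}$ of complex numbers with $a_0=1$ and $a_1\ne0$. The associated linear sequence of binomial type is $$p_n(\mathbf y)=\sum_{\lambda\vdash n}\frac{n!}{\prod_i\lambda_i!}\Big(\prod_i a_{\lambda_i}\Big)m_\lambda(\mathbf y),$$ where $m_\lambda$ is the monomial symmetric function. $\Pi$ is the algebra homomorphism from symmetric functions to $\mathbb C[x]$ given by $$\Pi\, m_\lambda(\mathbf y)=\frac{(x)_{\ell(\lambda)}}{\prod_{j\ge1}\mathrm{mult}_j(\lambda)!}.$$ Here $\ell(\lambda)$ is the number of nonzero parts, $\mathrm{mult}_j(\lambda)$ is the number of parts equal to $j$, and $(x)_k=x(x-1)\cdots(x-k+1)$. For a nonnegative integer $x$, $\Pi$ amounts to setting $y_1=\dots=y_x=1$ and all other variables equal to $0$. Since $a_0=1$, $\log\mathrm{Gen}(t)$ is a well-defined formal power series. *)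

From HB Require Import structures.
From mathcomp Require Import all_boot all_order all_algebra.
From mathcomp Require Import complex.
From mathcomp Require Import Rstruct.
Set Implicit Arguments. Unset Strict Implicit. Unset Printing Implicit Defensive.
Import Order.TTheory GRing.Theory Num.Theory.
Local Open Scope ring_scope.

Definition CC : fieldType := (complex.complex Rdefinitions.R).

Definition is_partition (n : nat) (l : seq nat) : bool :=
  [&& sorted geq l, all (fun i => 0 < i)%N l & sumn l == n].

(* a finite list of candidate sequences (length <= n, entries in [0,n]),
   filtered down to the partitions of n; it lists every partition of n
   exactly once *)
Definition candidates (n : nat) : seq (seq nat) :=
  flatten [seq [seq map (@nat_of_ord n.+1) (tval t) | t : k.-tuple 'I_n.+1]
          | k <- iota 0 n.+1].

Definition partitions (n : nat) : seq (seq nat) :=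
  [seq l <- candidates n | is_partition n l].

Definition falling {F : fieldType} (k : nat) : {poly F} :=
  \prod_(i < k) ('X - (i%:R)%:P).

(* mult_j(l) = count_mem j l; parts of a partition of n are in [1,n] *)
Definition Pi_m {F : fieldType} (n : nat) (l : seq nat) : {poly F} :=
  ((\prod_(1 <= j < n.+1) ((count_mem j l)`!)%:R : F)^-1) *: falling (size l).

(* p_n(x) = Pi p_n(y), with
   p_n(y) = sum_{l |- n} n!/prod_i l_i! * (prod_i a_{l_i}) m_l(y),
   Pi being applied linearly to the monomials m_l. *)
Definition pPi {F : fieldType} (a : nat -> F) (n : nat) : {poly F} :=
  \sum_(l <- partitions n)
     ((n`!%:R / (\prod_(i <- l) (i`!)%:R) * \prod_(i <- l) a i) *: Pi_m n l).

Definition fps (R : Type) := nat -> R.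

Definition fps_mul {R : comRingType} (f g : fps R) : fps R :=
  fun n => \sum_(i < n.+1) f i * g (n - i)%N.

Definition fps_one {R : comRingType} : fps R := fun n => if n is 0%N then 1 else 0.

Definition fps_pow {R : comRingType} (f : fps R) (k : nat) : fps R :=
  iter k (fps_mul f) fps_one.

(* log G for G with G_0 = 1: sum_{k>=1} (-1)^(k+1) (G-1)^k / k.
   Since (G-1)^k has no terms of degree < k, coefficient n only involves k <= n. *)
Definition fps_log {F : fieldType} (G : fps {poly F}) : fps {poly F} :=
  fun n => \sum_(1 <= k < n.+1)
     (((-1) ^+ k.+1 / k%:R : F) *: fps_pow (fun m => G m - fps_one m) k n).

(* exp H for H with H_0 = 0: sum_{k>=0} H^k / k!.
   Since H^k has no terms of degree < k, coefficient n only involves k <= n. *)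
Definition fps_exp {F : fieldType} (H : fps {poly F}) : fps {poly F} :=
  fun n => \sum_(k < n.+1) ((k`!%:R : F)^-1 *: fps_pow H k n).

Definition Gen {F : fieldType} (a : nat -> F) : fps {poly F} :=
  fun i => (a i / i`!%:R)%:P.

Definition Gen_pow_x {F : fieldType} (a : nat -> F) : fps {poly F} :=
  fps_exp (fun m => 'X * fps_log (Gen a) m).

Definition quasi_species {F : fieldType} (a : nat -> F) : Prop :=
  a 0%N = 1 /\ a 1%N <> 0.

From mathcomp Require Import all_boot all_order all_algebra.
From mathcomp Require Import ring zify.
From mathcomp Require Import complex Rstruct.
Set Implicit Arguments. Unset Strict Implicit. Unset Printing Implicit Defensive.
Import GRing.Theory Num.Theory.
Local Open Scope ring_scope.

(* Fix N and truncate every series in t at degree N; put U = Gen(t) - 1, which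
   has no constant term.  Both exp(x log(1 + U)) and the binomial series
   B = sum_l binom(x, l) U^l have constant term 1 and solve the linear ODE
   (1 + U) y' = x U' y modulo t^N, which determines the coefficients of t^0..t^N
   from the constant term; hence they agree up to t^N.  Expanding U^l, the
   coefficient of t^N is a sum over compositions of N into l positive parts;
   grouping them by their underlying partition lambda, each lambda arises from
   l! / prod_j mult_j(lambda)! compositions, and this turns [t^N] B into
   p_N(x) / N!. *)

Section PolyTruncation.
Variable R : comNzRingType.
Implicit Types p q : {poly R}.

Definition vanish_below (N : nat) p := forall i, (i < N)%N -> p`_i = 0.

Lemma vanish_below0 N : vanish_below N 0.
Proof. by move=> i _; rewrite coef0. Qed.

Lemma vanish_belowD N p q :
  vanish_below N p -> vanish_below N q -> vanish_below N (p + q).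
Proof. by move=> hp hq i hi; rewrite coefD hp ?hq ?addr0. Qed.

Lemma vanish_belowN N p : vanish_below N p -> vanish_below N (- p).
Proof. by move=> hp i hi; rewrite coefN hp ?oppr0. Qed.

Lemma vanish_belowB N p q :
  vanish_below N p -> vanish_below N q -> vanish_below N (p - q).
Proof. by move=> hp hq; apply: vanish_belowD => //; apply: vanish_belowN. Qed.

Lemma vanish_belowW M N p : (M <= N)%N -> vanish_below N p -> vanish_below M p.
Proof. by move=> hMN hp i hi; apply: hp; apply: leq_trans hMN. Qed.

Lemma vanish_belowM M N p q :
  vanish_below M p -> vanish_below N q -> vanish_below (M + N) (p * q).
Proof.
move=> hp hq i hi; rewrite coefM big1 // => j _.
have [hj|hj] := ltnP j M; first by rewrite hp ?mul0r.
rewrite hq ?mulr0 //; have := ltn_ord j; lia.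
Qed.

Lemma vanish_belowMl N p q : vanish_below N q -> vanish_below N (p * q).
Proof. exact: (@vanish_belowM 0). Qed.

Lemma vanish_belowMr N p q : vanish_below N p -> vanish_below N (p * q).
Proof. by rewrite mulrC; apply: vanish_belowMl. Qed.

Lemma vanish_belowX p k : vanish_below 1 p -> vanish_below k (p ^+ k).
Proof.
move=> hp; elim: k => [|k IH]; first by [].
by rewrite exprS -add1n; apply: vanish_belowM.
Qed.

Lemma vanish_below_sum N (I : Type) (r : seq I) (P : pred I) (F : I -> {poly R}) :
  (forall i, P i -> vanish_below N (F i)) ->
  vanish_below N (\sum_(i <- r | P i) F i).
Proof.
move=> hF; elim/big_rec: _ => [|i x Pi hx]; first exact: vanish_below0.
exact: vanish_belowD (hF i Pi) hx.
Qed.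

Lemma vanish_below_deriv N p : vanish_below N.+1 p -> vanish_below N p^`().
Proof. by move=> hp i hi; rewrite coef_deriv hp ?mul0rn. Qed.

Lemma fps_pow_coef (f : fps R) (P : {poly R}) N :
  (forall i, (i <= N)%N -> P`_i = f i) ->
  forall k n, (n <= N)%N -> fps_pow f k n = (P ^+ k)`_n.
Proof.
move=> hP; elim=> [|k IH] n hn; first by rewrite expr0 coef1; case: n {hn}.
rewrite exprS coefM /fps_pow iterS /fps_mul -/(fps_pow f k).
apply: eq_bigr => j _; rewrite hP ?IH //; have := ltn_ord j; lia.
Qed.

Lemma coef0_power_series (c : nat -> R) (P : {poly R}) n :
  vanish_below 1 P -> (\sum_(k < n.+1) c k *: P ^+ k)`_0 = c 0%N.
Proof.
move=> hP; rewrite coef_sum big_ord_recl /= coefZ expr0 coef1 mulr1.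
rewrite big1 ?addr0 // => k _.
by rewrite coefZ (vanish_belowX (k := bump 0 k) hP) ?mulr0.
Qed.

Lemma deriv_sumZ (I : Type) (r : seq I) (c : I -> R) (f : I -> {poly R}) :
  (\sum_(i <- r) c i *: f i)^`() = \sum_(i <- r) c i *: (f i)^`().
Proof. by rewrite linear_sum; apply: eq_bigr => i _; apply: derivZ. Qed.

End PolyTruncation.

Section BinomialSeries.
Variable F : fieldType.
Hypothesis charF0 : forall n, (n.+1%:R : F) != 0.

Local Notation T := {poly {poly F}}.

Lemma natr_pos_neq0 n : (0 < n)%N -> (n%:R : F) != 0.
Proof. by move=> n0; rewrite -(prednK n0) charF0. Qed.

Lemma natr_fact_neq0 n : (n`!%:R : F) != 0.
Proof. exact/natr_pos_neq0/fact_gt0. Qed.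

Lemma natr_factS_inv n : ((n.+1)`!%:R : F)^-1 *+ n.+1 = (n`!%:R)^-1.
Proof.
rewrite factS natrM -mulr_natr; field.
by rewrite natr_fact_neq0 -mulrS charF0.
Qed.

Definition binomial_poly (l : nat) : {poly F} := (l`!%:R : F)^-1 *: falling l.

Lemma binomial_polyS l :
  binomial_poly l.+1 *+ l.+1 + binomial_poly l *+ l = 'X * binomial_poly l.
Proof.
rewrite /binomial_poly /falling big_ord_recr /= -/(falling l).
rewrite scalerMnl natr_factS_inv -!mul_polyC polyC_natr; ring.
Qed.

Variables (N : nat) (U : T).
Hypothesis U0 : vanish_below 1 U.

Definition log1p_trunc : T :=
  \sum_(1 <= k < N.+1) ((-1) ^+ k.+1 / k%:R : F)%:P *: U ^+ k.

Definition exp_trunc (H : T) : T := \sum_(k < N.+1) ((k`!%:R : F)^-1)%:P *: H ^+ k.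

Definition binomial_series : T := \sum_(l < N.+1) binomial_poly l *: U ^+ l.

Definition binomial_ode (p : T) : T := (1 + U) * p^`() - ('X%:P * U^`()) * p.

Lemma binomial_odeB p q : binomial_ode (p - q) = binomial_ode p - binomial_ode q.
Proof. rewrite /binomial_ode derivB; ring. Qed.

(* Coefficient i of binomial_ode D is (i + 1) D_(i+1) plus terms in D_0, ..., D_i. *)
Lemma binomial_ode_uniq (D : T) :
  vanish_below N (binomial_ode D) -> D`_0 = 0 -> forall i, (i <= N)%N -> D`_i = 0.
Proof.
move=> hode D0; suff hD i : (i <= N)%N -> vanish_below i.+1 D by move=> i /hD; apply.
elim: i => [|i IH] hi; first by case.
have hDi := IH (ltnW hi).
move=> j; rewrite ltnS leq_eqVlt => /orP[/eqP->|]; last exact: hDi.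
have hUD : (U * D^`())`_i = 0 by apply: vanish_belowM U0 (vanish_below_deriv hDi) _ _.
have hXD : (('X%:P * U^`()) * D)`_i = 0 by apply: vanish_belowMl hDi _ _.
move: (hode i hi); rewrite /binomial_ode coefB mulrDl mul1r coefD hUD hXD.
rewrite addr0 subr0 coef_deriv -mulr_natr -polyC_natr => /eqP.
by rewrite mulf_eq0 polyC_eq0 (negbTE (charF0 _)) orbF => /eqP.
Qed.

Lemma binomial_series_deriv :
  binomial_series^`() = U^`() * \sum_(i < N) (binomial_poly i.+1 *+ i.+1) *: U ^+ i.
Proof.
rewrite /binomial_series deriv_sumZ big_ord_recl /= derivC scaler0 add0r mulr_sumr.
apply: eq_bigr => i _; rewrite deriv_exp /bump /= add1n -!mul_polyC polyCMn; ring.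
Qed.

Lemma binomial_ode_series_residual :
  (1 + U) * \sum_(i < N) (binomial_poly i.+1 *+ i.+1) *: U ^+ i
    - 'X%:P * binomial_series =
  (binomial_poly N *+ N - 'X * binomial_poly N) *: U ^+ N.
Proof.
set b := binomial_poly.
have US : U * \sum_(i < N) (b i.+1 *+ i.+1) *: U ^+ i =
    \sum_(i < N) (b i *+ i) *: U ^+ i + (b N *+ N) *: U ^+ N.
  have -> : U * \sum_(i < N) (b i.+1 *+ i.+1) *: U ^+ i =
      \sum_(i < N.+1) (b i *+ i) *: U ^+ i; last by rewrite big_ord_recr.
  rewrite [RHS]big_ord_recl /= mulr0n scale0r add0r mulr_sumr.
  by apply: eq_bigr => i _; rewrite -scalerAr -exprS.
have XB : 'X%:P * binomial_series =
    \sum_(i < N) (b i.+1 *+ i.+1) *: U ^+ i + \sum_(i < N) (b i *+ i) *: U ^+ i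
    + ('X * b N) *: U ^+ N.
  rewrite /binomial_series mulr_sumr big_ord_recr /= -big_split /=.
  congr (_ + _); last by rewrite mul_polyC scalerA.
  by apply: eq_bigr => i _; rewrite mul_polyC scalerA -scalerDl binomial_polyS.
rewrite mulrDl mul1r US XB scalerBl; ring.
Qed.

Lemma binomial_ode_series : vanish_below N (binomial_ode binomial_series).
Proof.
have -> : binomial_ode binomial_series =
    U^`() * ((binomial_poly N *+ N - 'X * binomial_poly N) *: U ^+ N).
  rewrite -binomial_ode_series_residual /binomial_ode binomial_series_deriv; ring.
apply: vanish_belowMl => i hi.
by rewrite coefZ (vanish_belowX U0) ?mulr0.
Qed.

Lemma log1p_truncE :
  log1p_trunc = \sum_(k < N) ((-1) ^+ k.+2 / k.+1%:R : F)%:P *: U ^+ k.+1.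
Proof. by rewrite /log1p_trunc big_add1 /= big_mkord. Qed.

Lemma log1p_trunc0 : vanish_below 1 log1p_trunc.
Proof.
rewrite log1p_truncE; apply: vanish_below_sum => k _ i hi.
by rewrite coefZ (vanish_belowW (ltn0Sn k) (vanish_belowX U0)) ?mulr0.
Qed.

Lemma log1p_trunc_deriv : (1 + U) * log1p_trunc^`() = U^`() * (1 - (- U) ^+ N).
Proof.
have -> : log1p_trunc^`() = U^`() * \sum_(k < N) (- U) ^+ k.
  rewrite log1p_truncE deriv_sumZ mulr_sumr; apply: eq_bigr => k _.
  have ek : ((-1) ^+ k.+2 / k.+1%:R : F) *+ k.+1 = (-1) ^+ k.
    by rewrite -mulr_natr !exprS; field; rewrite -?mulrS charF0.
  have e1 : (((-1) ^+ k : F)%:P%:P : T) = (-1) ^+ k by rewrite !rmorphXn !rmorphN1.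
  by rewrite deriv_exp /= -!mul_polyC [(- U) ^+ k]exprNn -e1 -ek !polyCMn; ring.
have -> : 1 - (- U) ^+ N = - ((- U) ^+ N - 1) by ring.
by rewrite subrX1; ring.
Qed.

Lemma binomial_ode_exp_log1p :
  vanish_below N (binomial_ode (exp_trunc ('X%:P * log1p_trunc))).
Proof.
set H := 'X%:P * log1p_trunc; set E := exp_trunc H.
set e : T := (((N`!%:R : F)^-1)%:P)%:P.
have dE : E^`() = H^`() * (E - e * H ^+ N).
  rewrite {1}/E /exp_trunc deriv_sumZ big_ord_recl /= derivC scaler0 add0r.
  rewrite /E /exp_trunc big_ord_recr /= /e mul_polyC addrK mulr_sumr.
  apply: eq_bigr => k _; rewrite deriv_exp /bump /= add1n -!mul_polyC.
  by rewrite add0n -(natr_factS_inv k) !polyCMn; ring.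
have dH : (1 + U) * H^`() = 'X%:P * U^`() * (1 - (- U) ^+ N).
  by rewrite /H deriv_mulC mulrCA log1p_trunc_deriv; ring.
have -> : binomial_ode E =
    'X%:P * U^`() * (- ((- U) ^+ N * (E - e * H ^+ N)) - e * H ^+ N).
  by rewrite /binomial_ode dE mulrA dH; ring.
apply: vanish_belowMl; apply: vanish_belowB.
  by apply/vanish_belowN/vanish_belowMr/vanish_belowX/vanish_belowN.
exact/vanish_belowMl/vanish_belowX/vanish_belowMl/log1p_trunc0.
Qed.

Lemma exp_log1p_trunc i :
  (i <= N)%N -> (exp_trunc ('X%:P * log1p_trunc))`_i = binomial_series`_i.
Proof.
move=> hi; apply/eqP; rewrite -subr_eq0 -coefB; apply/eqP.
apply: binomial_ode_uniq => //.
  by rewrite binomial_odeB; apply: vanish_belowB;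
    [apply: binomial_ode_exp_log1p | apply: binomial_ode_series].
have H0 : vanish_below 1 ('X%:P * log1p_trunc) := vanish_belowMl _ log1p_trunc0.
rewrite coefB /exp_trunc (coef0_power_series (fun k => ((k`!%:R : F)^-1)%:P)) //.
rewrite coef0_power_series // /binomial_poly /falling big_ord0 fact0 invr1.
by rewrite scale1r subrr.
Qed.

End BinomialSeries.
Arguments binomial_poly {F} l.

Section TruncatedFps.
Variables (F : fieldType) (N : nat).
Local Notation T := {poly {poly F}}.

Lemma log1p_trunc_coef (G : fps {poly F}) (U : T) :
  vanish_below 1 U -> (forall i, (i <= N)%N -> U`_i = G i - fps_one i) ->
  forall m, (m <= N)%N -> (log1p_trunc N U)`_m = fps_log G m.
Proof.
move=> U0 UG m hm; rewrite /log1p_trunc /fps_log coef_sum.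
rewrite (@big_cat_nat _ _ _ m.+1) ?ltnS //= [X in _ + X]big1_seq ?addr0; last first.
  move=> k /andP[_]; rewrite mem_index_iota => /andP[hk _].
  by rewrite coefZ (vanish_belowX U0) ?mulr0.
apply: eq_bigr => k _; rewrite coefZ mul_polyC; congr (_ *: _).
by rewrite (fps_pow_coef (P := U) (N := N)).
Qed.

Lemma exp_trunc_coef (H : T) (h : fps {poly F}) :
  (forall i, (i <= N)%N -> H`_i = h i) -> (exp_trunc N H)`_N = fps_exp h N.
Proof.
move=> Hh; rewrite /exp_trunc /fps_exp coef_sum; apply: eq_bigr => k _.
by rewrite coefZ mul_polyC (fps_pow_coef (P := H) (N := N)).
Qed.

Definition Gen_sub1_trunc (a : nat -> F) : T := \poly_(i < N.+1) (Gen a i - fps_one i).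

Variable a : nat -> F.
Hypothesis a0 : a 0%N = 1.

Lemma coef_Gen_sub1_trunc i : (i <= N)%N -> (Gen_sub1_trunc a)`_i = Gen a i - fps_one i.
Proof. by move=> hi; rewrite coef_poly ltnS hi. Qed.

Lemma Gen_sub1_trunc0 : vanish_below 1 (Gen_sub1_trunc a).
Proof. by case=> // _; rewrite coef_Gen_sub1_trunc // /Gen a0 fact0 divr1 subrr. Qed.

Lemma Gen_pow_x_trunc :
  Gen_pow_x a N = (exp_trunc N ('X%:P * log1p_trunc N (Gen_sub1_trunc a)))`_N.
Proof.
rewrite (@exp_trunc_coef _ (fun m => 'X * fps_log (Gen a) m)) // => i hi.
rewrite coefCM (@log1p_trunc_coef (Gen a) _ Gen_sub1_trunc0) //.
exact: coef_Gen_sub1_trunc.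
Qed.

End TruncatedFps.

Fixpoint weak_compositions (l n : nat) : seq (seq nat) :=
  if l is l'.+1 then [seq j :: s | j <- iota 0 n.+1, s <- weak_compositions l' (n - j)]
  else if n == 0%N then [:: [::]] else [::].

Lemma mem_weak_compositions l n s :
  (s \in weak_compositions l n) = (size s == l) && (sumn s == n).
Proof.
elim: l n s => [|l IH] n s; first by case: n => [|n]; case: s => [|x s].
apply/allpairsPdep/idP => [[j [s' [+ + ->]]]|].
  rewrite mem_iota IH => /andP[_ hj] /andP[/eqP hsz /eqP hsum].
  by rewrite /= hsz hsum subnKC ?eqxx // -ltnS.
case: s => [|j s] // /andP[hs /eqP hsum]; exists j, s.
by rewrite mem_iota IH -hsum /= addKn leq_addr (hs : size s == l) eqxx.
Qed.

Lemma weak_compositions_uniq l n : uniq (weak_compositions l n).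
Proof.
elim: l n => [|l IH] n; first by case: n.
apply: allpairs_uniq_dep => //; first exact: iota_uniq.
by case=> [_ _] [x t] _ _ [-> ->].
Qed.

Lemma coefX_weak_compositions (R : comNzRingType) (p : {poly R}) l n :
  (p ^+ l)`_n = \sum_(s <- weak_compositions l n) \prod_(i <- s) p`_i.
Proof.
elim: l n => [|l IH] n.
  by rewrite expr0 coef1; case: n => [|n] /=; rewrite ?big_seq1 ?big_nil.
rewrite exprS coefM big_allpairs_dep /=.
rewrite -(big_mkord xpredT (fun j => p`_j * (p ^+ l)`_(n - j))) /index_iota subn0.
apply: eq_bigr => j _; rewrite IH mulr_sumr; apply: eq_bigr => s _.
by rewrite big_cons.
Qed.

Definition positive (s : seq nat) := all (fun i => 0 < i)%N s.

Lemma size_le_sumn s : positive s -> (size s <= sumn s)%N.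
Proof. by elim: s => //= x s IH /andP[hx /IH]; lia. Qed.

Lemma mem_le_sumn s i : i \in s -> (i <= sumn s)%N.
Proof. by elim: s => //= x s IH; rewrite inE => /orP[/eqP ->|/IH]; lia. Qed.

Lemma mem_candidates n s :
  (size s <= n)%N -> all (fun i => i <= n)%N s -> s \in candidates n.
Proof.
move=> hsz hs; apply/flattenP.
exists [seq map (@nat_of_ord n.+1) (tval t) | t : (size s).-tuple 'I_n.+1].
  by apply/mapP; exists (size s); rewrite ?mem_iota.
have hsz' : size (map (@inord n) s) == size s by rewrite size_map.
apply/mapP; exists (Tuple hsz'); first by rewrite mem_enum.
rewrite /= -map_comp map_id_in // => i hi /=; rewrite inordK // ltnS.
exact: (allP hs).
Qed.

Lemma uniq_flatten_map_keyed (T T' : eqType) (key : T -> T') (s : seq T')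
    (f : T' -> seq T) :
  uniq s -> (forall k, uniq (f k)) -> (forall k x, x \in f k -> key x = k) ->
  uniq (flatten (map f s)).
Proof.
move=> us uf kf; elim: s us => //= k s IH /andP[ks us].
rewrite cat_uniq uf IH // andbT; apply/hasPn => x /flattenP[y /mapP[k' hk' ->] hx].
by apply/negP => hxk; move: ks; rewrite -(kf _ _ hxk) (kf _ _ hx) hk'.
Qed.

Lemma candidates_uniq n : uniq (candidates n).
Proof.
apply: (@uniq_flatten_map_keyed _ _ size); first exact: iota_uniq.
  move=> k; rewrite map_inj_uniq ?enum_uniq // => t1 t2 /(inj_map val_inj).
  exact: val_inj.
by move=> k x /mapP[t _ ->]; rewrite size_map size_tuple.
Qed.

Lemma mem_partitions n t : (t \in partitions n) = is_partition n t.
Proof.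
rewrite mem_filter; apply: andb_idr => /and3P[_ hpos /eqP hsum].
apply: mem_candidates; first by rewrite -hsum size_le_sumn.
by apply/allP => i hi; rewrite -hsum mem_le_sumn.
Qed.

Lemma partitions_uniq n : uniq (partitions n).
Proof. exact/filter_uniq/candidates_uniq. Qed.

Lemma sum_count_mem_undup (T : eqType) (t : seq T) :
  (\sum_(x <- undup t) count_mem x t)%N = size t.
Proof.
rewrite -(perm_size (perm_count_undup t)) size_flatten /shape -map_comp sumnE big_map.
by apply: eq_bigr => x _; rewrite /= size_nseq.
Qed.

Lemma prod_fact_count_rem (T : eqType) (t D : seq T) x :
  uniq D -> x \in D -> x \in t ->
  (\prod_(j <- D) (count_mem j t)`!)%N =
  (count_mem x t * \prod_(j <- D) (count_mem j (rem x t))`!)%N.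
Proof.
move=> uD xD xt; rewrite (bigD1_seq x) //= [X in (_ = _ * X)%N](bigD1_seq x) //=.
have hc : (0 < count_mem x t)%N by rewrite -has_count has_pred1.
rewrite count_rem xt /= eqxx -(prednK hc) factS subn1 /= mulnA; congr (_ * _)%N.
by apply: eq_bigr => j hj; rewrite count_rem xt /= eq_sym (negbTE hj) subn0.
Qed.

Lemma size_permutations_count (T : eqType) (t D : seq T) :
  uniq D -> {subset t <= D} ->
  (size (permutations t) * \prod_(j <- D) (count_mem j t)`!)%N = (size t)`!.
Proof.
move=> uD; move Dn: (size t) => n; elim: n t Dn => [|n IH] t Dn tD.
  by case: t Dn tD => // _ _; rewrite big1.
have ht : (0 < size t)%N by rewrite Dn.
rewrite (perm_size (permutationsE ht)) size_allpairs_dep sumnE big_map big_distrl /=.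
rewrite (eq_big_seq (fun x => count_mem x t * n`!)%N).
  by rewrite -big_distrl /= sum_count_mem_undup Dn factS mulnC.
move=> x; rewrite mem_undup => xt.
rewrite (prod_fact_count_rem uD (tD x xt) xt) mulnCA IH ?size_rem ?Dn //.
by move=> y /mem_rem; apply: tD.
Qed.

Lemma geq_total : total geq.
Proof. by move=> x y; apply: leq_total. Qed.

Lemma geq_anti : antisymmetric geq.
Proof. by move=> x y h; apply: anti_leq; rewrite andbC. Qed.

Lemma sort_partition n s : positive s -> sumn s = n -> sort geq s \in partitions n.
Proof.
move=> hs hsum; rewrite mem_partitions /is_partition sort_sorted; last exact: geq_total.
rewrite (perm_all _ (permEl (perm_sort geq s))) (perm_sumn (permEl (perm_sort geq s))).
by rewrite hsum eqxx andbT.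
Qed.

Lemma count_partitions_perm l n s :
  s \in weak_compositions l n -> positive s ->
  count (fun t => (size t == l) && perm_eq s t) (partitions n) = 1%N.
Proof.
rewrite mem_weak_compositions => /andP[/eqP hsz /eqP hsum] hs.
rewrite (@eq_in_count _ _ (pred1 (sort geq s))).
  by rewrite count_uniq_mem ?partitions_uniq ?sort_partition.
move=> t; rewrite mem_partitions => /and3P[ts _ _] /=.
apply/idP/eqP => [/andP[_ hst]|->].
  apply: (sorted_eq (rev_trans leq_trans) geq_anti) => //.
    exact: sort_sorted geq_total _.
  by rewrite perm_sym perm_sort.
by rewrite size_sort hsz eqxx perm_sym perm_sort perm_refl.
Qed.

Lemma count_compositions_perm l n t :
  t \in partitions n -> size t = l ->
  count (fun s => positive s && perm_eq s t) (weak_compositions l n) =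
  size (permutations t).
Proof.
rewrite mem_partitions => /and3P[_ tp /eqP tsum] tsz.
rewrite -size_filter; apply/perm_size/uniq_perm.
- exact/filter_uniq/weak_compositions_uniq.
- exact: permutations_uniq.
move=> s; rewrite mem_filter mem_permutations mem_weak_compositions.
apply/idP/idP => [/andP[/andP[_ ->] _] //| hst].
rewrite hst /positive (perm_all _ hst) tp (perm_size hst) tsz (perm_sumn hst) tsum.
by rewrite !eqxx.
Qed.

Lemma sum_positive_compositions (R : nmodType) (w : seq nat -> R) l n :
  (forall s t, perm_eq s t -> w s = w t) ->
  \sum_(s <- weak_compositions l n | positive s) w s =
  \sum_(t <- partitions n | size t == l) w t *+ size (permutations t).
Proof.
move=> wP.
have -> : \sum_(t <- partitions n | size t == l) w t *+ size (permutations t) =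
    \sum_(t <- partitions n) \sum_(s <- weak_compositions l n)
      (if (size t == l) && (positive s && perm_eq s t) then w s else 0).
  rewrite big_mkcond /=; apply: eq_big_seq => t ht.
  case: eqP => [hl|_]; last by rewrite big1.
  rewrite -big_mkcond /= (eq_bigr (fun _ => w t)); last by move=> s /andP[_ /wP].
  by rewrite big_const_seq iter_addr_0 count_compositions_perm.
rewrite exchange_big /= big_mkcond /=; apply: eq_big_seq => s hs.
case hp: (positive s); last by rewrite big1 // => t _; rewrite andbF.
rewrite -big_mkcond /= big_const_seq iter_addr_0.
rewrite (eq_count (a2 := fun t => (size t == l) && perm_eq s t)) //.
by rewrite (count_partitions_perm hs hp).
Qed.

Section PartitionExpansion.
Variable F : fieldType.
Hypothesis charF0 : forall n, (n.+1%:R : F) != 0.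
Variables (a : nat -> F) (N : nat).
Hypothesis a0 : a 0%N = 1.

Definition Gen_weight (s : seq nat) : {poly F} := (\prod_(i <- s) (a i / i`!%:R))%:P.

Lemma Gen_weight_perm s t : perm_eq s t -> Gen_weight s = Gen_weight t.
Proof. by move=> st; rewrite /Gen_weight (perm_big _ st). Qed.

Lemma coefX_Gen_sub1_trunc l :
  ((Gen_sub1_trunc N a) ^+ l)`_N =
  \sum_(s <- weak_compositions l N | positive s) Gen_weight s.
Proof.
rewrite coefX_weak_compositions [RHS]big_mkcond /=; apply: eq_big_seq => s.
rewrite mem_weak_compositions => /andP[_ /eqP hsum].
case: ifP => hs.
  rewrite /Gen_weight rmorph_prod /=; apply: eq_big_seq => i si.
  rewrite coef_Gen_sub1_trunc -?hsum ?mem_le_sumn // /Gen.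
  by move: (allP hs i si); case: i {si} => // i _; rewrite subr0.
have s0 : 0%N \in s.
  apply: contraFT hs => s'0; apply/allP => i si; rewrite lt0n.
  by apply: contraNneq s'0 => <-.
by rewrite (big_rem _ s0) /= (Gen_sub1_trunc0 N a0) ?mul0r.
Qed.

Lemma binomial_series_partitions :
  (binomial_series N (Gen_sub1_trunc N a))`_N =
  \sum_(t <- partitions N)
    binomial_poly (size t) * (Gen_weight t *+ size (permutations t)).
Proof.
rewrite /binomial_series coef_sum.
under eq_bigr => l _ do rewrite coefZ coefX_Gen_sub1_trunc
  (sum_positive_compositions _ _ Gen_weight_perm) mulr_sumr.
rewrite (exchange_big_dep xpredT) //=; apply: eq_big_seq => t.
rewrite mem_partitions => /and3P[_ tp /eqP tsum].
have ht : (size t < N.+1)%N by rewrite ltnS -tsum size_le_sumn.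
rewrite (bigD1 (Ordinal ht)) //= big1 ?addr0 // => j /andP[/eqP tj].
by rewrite -(inj_eq val_inj) /= -tj eqxx.
Qed.

Lemma pPi_summand t : t \in partitions N ->
  (N`!%:R : F)^-1 *:
    ((N`!%:R / \prod_(i <- t) (i`!)%:R * \prod_(i <- t) a i) *: Pi_m N t) =
  binomial_poly (size t) * (Gen_weight t *+ size (permutations t)).
Proof.
rewrite mem_partitions => /and3P[_ tp /eqP tsum].
set M := (\prod_(1 <= j < N.+1) (count_mem j t)`!)%N.
have tM : (size (permutations t) * M)%N = (size t)`!.
  apply: size_permutations_count; first exact: iota_uniq.
  move=> i ti; rewrite mem_index_iota ltnS -tsum mem_le_sumn // andbT.
  exact: (allP tp).
have [sp0 M0] : (0 < size (permutations t))%N /\ (0 < M)%N.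
  by apply/andP; rewrite -muln_gt0 tM fact_gt0.
have tf0 : (0 < \prod_(i <- t) i`!)%N by rewrite prodn_gt0 // => i; apply: fact_gt0.
rewrite /Pi_m /Gen_weight /binomial_poly -!natr_prod -/M -tM big_split /= prodfV.
rewrite !scalerA mulrnAr (mulrC (_ *: _)) mul_polyC scalerA scalerMnl natrM -natr_prod.
congr (_ *: _); rewrite -mulr_natr; field.
by rewrite !(natr_pos_neq0 charF0) ?fact_gt0.
Qed.

Lemma pPi_binomial_series :
  (N`!%:R : F)^-1 *: pPi a N = (binomial_series N (Gen_sub1_trunc N a))`_N.
Proof.
rewrite binomial_series_partitions /pPi scaler_sumr.
by apply: eq_big_seq => t; apply: pPi_summand.
Qed.

End PartitionExpansion.

Lemma CC_char0 n : (n.+1%:R : CC) != 0.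
Proof. by move: (@pnatr_eq0 (complex.complex Rdefinitions.R) n.+1) => /= ->. Qed.

Theorem mainTheorem4 (a : nat -> CC) :
  quasi_species a ->
  forall n : nat,
    ((n`!%:R : CC)^-1 *: pPi a n) = Gen_pow_x a n.
Proof.
move=> [a0 _] n.
rewrite (pPi_binomial_series CC_char0 n a0) (Gen_pow_x_trunc n a0).
by rewrite (exp_log1p_trunc CC_char0 (Gen_sub1_trunc0 n a0)).
Qed.
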